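(* Let $M$ be a finitary matroid on $E$, $B$ a base of $M$, and $H\subseteq E\setminus B$ such that $\kappa:=|H|$ is an uncountable regular cardinal. Suppose there is $B'\subseteq B$ with $|B'|<\kappa$ such that $C_M(e,B)\cap B'\neq\emptyset$ for every $e\in H$. Then there exist $e^*\in H$ and a $\Delta$-system $\mathcal{D}$ of $\kappa$ many circuits of $M$ with kernel $K$ such that $\bigcup\mathcal{D}\subseteq\bigcup_{e\in H}C_M(e,B)$ and $e^*\in K\subseteq C_M(e^*,B)\setminus B'$.
   Context: $C_M(e,B)$ is the fundamental circuit of $e\notin B$ on the base $B$ (the unique circuit in $B\cup\{e\}$). A $\Delta$-system is a family of (at least two) sets any two of which have the same intersection $K$, called its kernel; the sets $C\setminus K$ for members $C$ are its petals. *)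

(* sets are [set E] over an arbitrary type E
   (the ground set of the matroid is the whole type E). *)
From HB Require Import structures.
From mathcomp Require Import all_boot all_order.
From mathcomp Require Import boolp classical_sets cardinality.

Set Implicit Arguments.
Unset Strict Implicit.
Unset Printing Implicit Defensive.

Local Open Scope classical_set_scope.
Local Open Scope card_scope.

Definition card_lt T U (A : set T) (B : set U) : Prop := A #<= B /\ ~ (B #<= A).

(* Matroids on the ground set E (whole type), via the independence axioms
   (I1)-(I4) of Bruhn, Diestel, Kriesell, Pendavingh, Wollan. *)
Section Matroid.
Variable E : Type.
Variable indep : set E -> Prop.

Definition maximal_indep (I : set E) : Prop :=
  indep I /\ forall J, indep J -> I `<=` J -> J = I.

Definition matroid_axioms : Prop :=
  [/\ indep set0,
      (forall I J, indep J -> I `<=` J -> indep I),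
      (forall I J, indep I -> ~ maximal_indep I -> maximal_indep J ->
          exists2 x, (J `\` I) x & indep (x |` I)) &
      (forall I X, indep I -> I `<=` X ->
          exists2 J, [/\ indep J, I `<=` J & J `<=` X] &
            forall J', indep J' -> J `<=` J' -> J' `<=` X -> J' = J)].

Definition is_circuit (C : set E) : Prop :=
  ~ indep C /\ forall D, D `<=` C -> ~ indep D -> D = C.

Definition finitary : Prop := forall C, is_circuit C -> finite_set C.
End Matroid.

Record finitary_matroid (E : Type) := FinitaryMatroid {
  indep : set E -> Prop;
  indep_axioms : matroid_axioms indep;
  indep_finitary : finitary indep }.

Definition base E (M : finitary_matroid E) (B : set E) := maximal_indep (indep M) B.
Definition circuit E (M : finitary_matroid E) (C : set E) := is_circuit (indep M) C.

(* C_M(e,B): the (unique, when B is a base and e \notin B) circuit contained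
   in B + e; chosen by Hilbert's epsilon. *)
Definition fcirc E (M : finitary_matroid E) (e : E) (B : set E) : set E :=
  xget set0 (fun C => circuit M C /\ C `<=` e |` B).

Definition delta_system E (D : set (set E)) (K : set E) : Prop :=
  (exists C1 C2, [/\ D C1, D C2 & C1 <> C2]) /\
  (forall C1 C2, D C1 -> D C2 -> C1 <> C2 -> C1 `&` C2 = K).

Definition uncountable E (H : set E) : Prop := ~ countable H.
Definition regular_card E (H : set E) : Prop :=
  forall (I : Type) (F : I -> set E),
    card_lt [set: I] H -> (forall i, F i `<=` H /\ card_lt (F i) H) ->
    card_lt (\bigcup_i F i) H.

From HB Require Import structures.
From mathcomp Require Import all_boot all_order.
From mathcomp Require Import boolp classical_sets cardinality.
From mathcomp Require Import finmap functions.
From mathcomp Require Import zify.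

Set Implicit Arguments.
Unset Strict Implicit.
Unset Printing Implicit Defensive.

Local Open Scope classical_set_scope.
Local Open Scope card_scope.

(* The fundamental circuits [C_e], [e] in [H], are finite.  By the Delta-system
   lemma, a subfamily of size |H| pairwise meets inside a finite [R] of [B]; as
   [B'] is small, a further such subfamily meets [B'] only inside [R].  The
   petals [C_e \ R] are then disjoint and independent, and an independent union
   of petals has at most |R| members.  Take [m] least such that some [Y0] of size
   |H| bounds these unions by [m], and [e*] in [Y0].  Every subset of size |H| of
   [Y0 - e*] contains [m] petals with independent union, which together with the
   petal of [e*] carry a circuit; strong circuit elimination forces it through
   [e*].  A maximal disjoint family of such sets of petals has size |H| by
   regularity, its circuits pairwise meet inside the finite petal of [e*], and a
   subfamily of size |H| with a common trace there is the Delta-system. *)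

(** * Finite matroid theory from the infinite-matroid axioms *)

Section FiniteMatroid.
Variables (T : choiceType) (ind : set T -> Prop).
Hypothesis ind_ax : matroid_axioms ind.

Local Notation circ C := (is_circuit ind [set` C]).

Lemma indepS I J : ind J -> I `<=` J -> ind I.
Proof. by case: ind_ax => _ h _ _; apply: h. Qed.
Arguments indepS {I J}.

Lemma indep_exchange I J : ind I -> ~ maximal_indep ind I -> maximal_indep ind J ->
  exists2 x, (J `\` I) x & ind (x |` I).
Proof. by case: ind_ax => _ _ h _; apply: h. Qed.

Lemma indep_maximal_in I X : ind I -> I `<=` X ->
  exists2 J, [/\ ind J, I `<=` J & J `<=` X] &
    forall J', ind J' -> J `<=` J' -> J' `<=` X -> J' = J.
Proof. by case: ind_ax => _ _ _ h; apply: h. Qed.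

Lemma indep_extend_base I : ind I -> exists2 B, maximal_indep ind B & I `<=` B.
Proof.
move=> iI; have [J [iJ IJ _] maxJ] := indep_maximal_in iI (@subsetT _ I).
by exists J => //; split => // J' iJ' JJ'; apply: maxJ.
Qed.

Lemma base_exchange B1 B2 : maximal_indep ind B1 -> maximal_indep ind B2 ->
  (B2 `\` B1) !=set0 ->
  exists x y W, [/\ (B1 `\` B2) x, (B2 `\` B1) y, maximal_indep ind W,
     B1 `\` W `<=` (B1 `\` B2) `\ x & B2 `\` B1 `<=` y |` (W `\` B1)].
Proof.
move=> [iB1 mB1] [iB2 mB2] [y [B2y nB1y]].
have iB2y : ind (B2 `\ y) by apply: indepS iB2 _; apply: subDsetl.
have nmax : ~ maximal_indep ind (B2 `\ y).
  move=> [_ m]; have E := m _ iB2 (@subDsetl _ _ _).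
  have : (B2 `\ y) y by rewrite -E.
  by move=> [_]; apply.
have [x [B1x nx] ix] := indep_exchange iB2y nmax (conj iB1 mB1).
have nB2x : ~ B2 x.
  by move=> B2x; apply: nx; split => // exy; apply: nB1y; rewrite -exy.
have [W mW sW] := indep_extend_base ix.
have nWy : ~ W y.
  move=> Wy; have ixB2 : ind (x |` B2).
    apply: indepS (proj1 mW) _ => z [->|B2z]; first by apply: sW; left.
    by have [->//|zy] := pselect (z = y); apply: sW; right.
  have E := mB2 _ ixB2 (fun z h => or_intror h).
  by apply: nB2x; rewrite -E; left.
exists x, y, W; split => //.
- move=> z [B1z nWz]; split; last by move=> zx; apply: nWz; rewrite zx; apply: sW; left.
  split => // B2z; have [zy|zy] := pselect (z = y); first by apply: nB1y; rewrite -zy.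
  by apply: nWz; apply: sW; right.
- move=> z [B2z nB1z]; have [->|zy] := pselect (z = y); first by left.
  by right; split => //; apply: sW; right.
Qed.

Lemma base_diff_card_le B1 B2 : maximal_indep ind B1 -> maximal_indep ind B2 ->
  finite_set (B1 `\` B2) ->
  finite_set (B2 `\` B1) /\
  (#|` fset_set (B2 `\` B1)| <= #|` fset_set (B1 `\` B2)|)%N.
Proof.
move: {2}#|` _| (leqnn #|` fset_set (B1 `\` B2)|) => n.
elim: n B1 B2 => [|n IH] B1 B2 lt12 m1 m2 f12.
  have E : B2 `\` B1 = set0.
    apply/seteqP; split => // y B21y.
    have [x [y' [W [B12x _ _ _ _]]]] := base_exchange m1 m2 (ex_intro _ y B21y).
    move: lt12; rewrite leqn0 cardfs_eq0 => /eqP/(fset_set_set0 f12) E12.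
    by move: B12x; rewrite E12.
  by rewrite E fset_set0 cardfs0; split => //; exact: finite_set0.
have [ne|e] := pselect ((B2 `\` B1) !=set0); last first.
  have -> : B2 `\` B1 = set0 by apply/seteqP; split => // z hz; apply: e; exists z.
  by rewrite fset_set0 cardfs0; split => //; exact: finite_set0.
have [x [y [W [B12x B21y mW s1 s2]]]] := base_exchange m1 m2 ne.
have f1W : finite_set (B1 `\` W) by apply: sub_finite_set s1 _; apply: finite_setD.
have ltW : (#|` fset_set (B1 `\` W)| < #|` fset_set (B1 `\` B2)|)%N.
  rewrite [X in (_ < X)%N](cardfsD1 x) in_fset_set // (mem_set B12x) add1n ltnS.
  rewrite -fset_setD1 //.
  by apply: fsubset_leq_card; rewrite -fset_set_sub //; apply: finite_setD.
have [fW1 leW] := IH B1 W (leq_trans ltW lt12) m1 mW f1W.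
have fU : finite_set (y |` (W `\` B1)) by rewrite finite_setU; split => //; exact: finite_set1.
split; first exact: sub_finite_set s2 fU.
apply: (leq_trans (fsubset_leq_card (_ : _ `<=` fset_set (y |` (W `\` B1)))%fset)).
  by rewrite -fset_set_sub //; exact: sub_finite_set s2 fU.
rewrite fset_setU1 // cardfsU1; apply: leq_trans _ (leq_ltn_trans leW ltW).
by rewrite -add1n leq_add2r leq_b1.
Qed.

Lemma card_fset_set_le (A : set T) (F : {fset T}) :
  A `<=` [set` F] -> (#|` fset_set A| <= #|` F|)%N.
Proof.
move=> AF; rewrite -(set_fsetK F); apply: fsubset_leq_card.
by rewrite -fset_set_sub //; exact: sub_finite_set AF (finite_fset F).
Qed.

Lemma card_le_fset_set (F : {fset T}) (A : set T) :
  finite_set A -> [set` F] `<=` A -> (#|` F| <= #|` fset_set A|)%N.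
Proof.
move=> fA FA; rewrite -(set_fsetK F); apply: fsubset_leq_card.
by rewrite -fset_set_sub //; exact: finite_fset.
Qed.

Lemma indep_augment (I J : {fset T}) : ind [set` I] -> ind [set` J] ->
  (#|` I| < #|` J|)%N -> exists x, [/\ x \in J, x \notin I & ind (x |` [set` I])].
Proof.
move=> iI iJ ltIJ; have [BJ mBJ sJ] := indep_extend_base iJ.
have [B [iB sIB sB] maxB] := indep_maximal_in iI (@subsetUl _ [set` I] BJ).
have mB : maximal_indep ind B.
  have [//|nmB] := pselect (maximal_indep ind B).
  have [z [BJz nBz] iz] := indep_exchange iB nmB mBJ; exfalso.
  have zBsub : (z |` B) `<=` [set` I] `|` BJ by move=> w [->|]; [right|apply: sB].
  by apply: nBz; rewrite -(maxB _ iz (fun w h => or_intror h) zBsub); left.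
have sD : B `\` BJ `<=` [set` (I `\` J)%fset].
  move=> z [Bz nBJz]; have [Iz|//] := sB _ Bz.
  by rewrite /= inE Iz andbT; apply/negP => Jz; apply: nBJz; apply: sJ.
have fD : finite_set (B `\` BJ) by apply: sub_finite_set sD (finite_fset _).
have [fD2 le2] := base_diff_card_le mB mBJ fD.
have le3 := card_fset_set_le sD.
apply: contrapT => nex.
have sD2 : [set` (J `\` I)%fset] `<=` BJ `\` B.
  move=> z /=; rewrite inE => /andP [nIz Jz]; split; first exact: sJ.
  move=> Bz; apply: nex; exists z; split => //.
  by apply: indepS iB _ => w [->//|]; exact: sIB.
have le4 := card_le_fset_set fD2 sD2.
have h1 := cardfsID I J; have h2 := cardfsID J I; rewrite fsetIC in h2.
by move: ltIJ le2 le3 le4 h1 h2; clear; lia.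
Qed.

Lemma circuit_proper_indep (C D : {fset T}) : circ C -> (D `<` C)%fset -> ind [set` D].
Proof.
move=> [nC mC] pD; apply: contrapT => nD.
have E := mC _ (fun z (h : z \in D) => fsubsetP (fproper_sub pD) z h) nD.
by move: (fproper_neq pD); rewrite (can_inj (@set_fsetK _) E) eqxx.
Qed.

Lemma dependent_has_circuit (X : {fset T}) : ~ ind [set` X] ->
  exists C : {fset T}, (C `<=` X)%fset /\ circ C.
Proof.
have [n] := ubnP #|`X|; elim: n X => // n IH X ltX nX.
have [[Y [pY nY]]|none] :=
  pselect (exists Y : {fset T}, (Y `<` X)%fset /\ ~ ind [set` Y]).
  have ltY : (#|` Y| < n)%N by move: (fproper_ltn_card pY) ltX; clear; lia.
  have [C [sC cC]] := IH Y ltY nY.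
  by exists C; split => //; exact: fsubset_trans sC (fproper_sub pY).
exists X; split => //; split => // D sD nD.
have fD : finite_set D := sub_finite_set sD (finite_fset X).
have DY : D = [set` fset_set D] by rewrite fset_setK.
have [eYX|neYX] := eqVneq (fset_set D) X; first by rewrite DY eYX.
exfalso; apply: none; exists (fset_set D); split; last by rewrite -DY.
rewrite fproperEneq neYX /=; apply/fsubsetP => z; rewrite in_fset_set // => zD.
by have := sD z (set_mem zD).
Qed.

Lemma fproper_card_lt (A B : {fset T}) a : a \in B -> (A `<=` B `\ a)%fset ->
  (#|` A| < #|` B|)%N.
Proof.
move=> aB sA; have := fsubset_leq_card sA; rewrite [#|` B|](cardfsD1 a) aB.
by rewrite add1n ltnS.
Qed.

Lemma circuit_subsetPn (C1 C2 : {fset T}) : circ C1 -> circ C2 -> C1 != C2 ->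
  exists2 y, y \in C2 & y \notin C1.
Proof.
move=> [_ mC1] [nC2 _] ne; apply/fsubsetPn/negP => s21.
have E := mC1 _ (fun z (h : z \in C2) => fsubsetP s21 z h) nC2.
by move: ne; rewrite (can_inj (@set_fsetK _) E) eqxx.
Qed.

Lemma indep_maximal_in_card (U I : {fset T}) (J : set T) :
  ind J -> J `<=` [set` U] ->
  (forall J', ind J' -> J `<=` J' -> J' `<=` [set` U] -> J' = J) ->
  ind [set` I] -> (I `<=` U)%fset -> (#|` I| <= #|` fset_set J|)%N.
Proof.
move=> iJ JU maxJ iI IU; have fJ : finite_set J := sub_finite_set JU (finite_fset U).
have EJ : [set` fset_set J] = J by rewrite fset_setK.
rewrite leqNgt; apply/negP => lt.
have iJ' : ind [set` fset_set J] by rewrite EJ.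
have [w [wI nwJ]] := indep_augment iJ' iI lt; rewrite EJ => iw.
have wJU : w |` J `<=` [set` U] by move=> a [->|/JU//]; exact: fsubsetP IU w wI.
move: nwJ; rewrite in_fset_set // => /negP; apply; apply: mem_set.
by rewrite -(maxJ _ iw (fun a h => or_intror h) wJU); left.
Qed.

(* A maximal independent subset of [C1 `|` C2] containing [C2 `\ y] misses [y]
   and a point of [C1], so it is smaller than [(C1 `|` C2) `\ x]. *)
Lemma circuit_elim_weak (C1 C2 : {fset T}) x : circ C1 -> circ C2 -> C1 != C2 ->
  x \in C1 -> x \in C2 -> ~ ind [set` ((C1 `|` C2) `\ x)%fset].
Proof.
move=> c1 c2 ne x1 x2 iU; have [nC1 _] := c1; have [nC2 _] := c2.
have [y y2 ny1] := circuit_subsetPn c1 c2 ne.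
set U := (C1 `|` C2)%fset.
have pC2 : (C2 `\ y `<` C2)%fset.
  by rewrite fproperEneq fsubD1set andbT; apply/eqP => /fsetP /(_ y); rewrite fsetD11 y2.
have sIU : [set` (C2 `\ y)%fset] `<=` [set` U].
  by move=> z /=; rewrite !inE => /andP [_ ->]; rewrite orbT.
have [J [iJ sJ1 sJU] maxJ] := indep_maximal_in (circuit_proper_indep c2 pC2) sIU.
have fJ : finite_set J := sub_finite_set sJU (finite_fset U).
have nJy : ~ J y.
  move=> Jy; apply: nC2; apply: (indepS iJ) => z /= z2.
  by have [->//|zy] := eqVneq z y; apply: sJ1 => /=; rewrite !inE zy z2.
have [z z1 nJz] : exists2 z, z \in C1 & ~ J z.
  apply: contrapT => h; apply: nC1; apply: (indepS iJ) => w /= w1.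
  by apply: contrapT => nw; apply: h; exists w.
have sJ : (fset_set J `<=` (U `\ y) `\ z)%fset.
  apply/fsubsetP => w; rewrite in_fset_set // => /set_mem Jw.
  apply/fsetD1P; split; first by apply/eqP => e; subst w.
  apply/fsetD1P; split; first by apply/eqP => e; subst w.
  exact: sJU w Jw.
have zUy : z \in (U `\ y)%fset.
  by rewrite !inE z1 andbT; apply/eqP => ezy; move: ny1; rewrite -ezy z1.
have xU : x \in U by rewrite !inE x1.
have yU : y \in U by rewrite !inE y2 orbT.
have := indep_maximal_in_card iJ sJU maxJ iU (fsubD1set U x); rewrite -/U.
have h1 := cardfsD1 y U; have h2 := cardfsD1 x U; have lt := fproper_card_lt zUy sJ.
rewrite yU in h1; rewrite xU in h2.
by move: lt h1 h2; clear; lia.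
Qed.

(* If weak elimination misses [y], eliminate [x] between [C2] and [C3] at some
   [z] of [C3] outside [C1] to get [C4] through [x], then between [C1] and [C4]. *)
Lemma circuit_elim_strong (C1 C2 : {fset T}) x y : circ C1 -> circ C2 ->
  x \in C1 -> x \in C2 -> y \in C1 -> y \notin C2 ->
  exists C3 : {fset T}, [/\ circ C3, (C3 `<=` (C1 `|` C2) `\ x)%fset & y \in C3].
Proof.
have [n] := ubnP #|` (C1 `|` C2)%fset|; elim: n C1 C2 x y => // n IH C1 C2 x y ltn
  c1 c2 x1 x2 y1 ny2.
have ne : C1 != C2 by apply/eqP => e; move: ny2; rewrite -e y1.
have [C3 [s3 c3]] := dependent_has_circuit (circuit_elim_weak c1 c2 ne x1 x2).
have [y3|ny3] := boolP (y \in C3); first by exists C3.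
have x3 : x \notin C3.
  by apply/negP => /(fsubsetP s3); rewrite !inE eqxx.
have [z z3 nz1] : exists2 z, z \in C3 & z \notin C1.
  by apply: circuit_subsetPn c1 c3 _; apply: contraNneq x3 => <-.
have z2 : z \in C2.
  by move: (fsubsetP s3 z z3); rewrite !inE (negbTE nz1) /= => /andP [].
have lt23 : (#|` (C2 `|` C3)%fset| < n)%N.
  have h : (C2 `|` C3 `<=` (C1 `|` C2) `\ y)%fset.
    apply/fsubsetP => w; rewrite !inE => /orP [w2|w3].
      by rewrite w2 orbT andbT; apply/eqP => e; move: ny2; rewrite -e w2.
    have := fsubsetP s3 w w3; rewrite !inE => /andP [_ ->]; rewrite andbT.
    by apply/eqP => e; move: ny3; rewrite -e w3.
  have yU : y \in (C1 `|` C2)%fset by rewrite !inE y1.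
  have := fproper_card_lt yU h; move: ltn; clear; lia.
have [C4 [c4 s4 x4]] := IH _ _ _ _ lt23 c2 c3 z2 z3 x2 x3.
have ny4 : y \notin C4.
  apply/negP => /(fsubsetP s4); rewrite !inE => /andP [_ /orP [] h].
    by move: ny2; rewrite h.
  by move: ny3; rewrite h.
have lt14 : (#|` (C1 `|` C4)%fset| < n)%N.
  have h : (C1 `|` C4 `<=` (C1 `|` C2) `\ z)%fset.
    apply/fsubsetP => w; rewrite !inE => /orP [w1|w4].
      by rewrite w1 andbT; apply/eqP => e; move: nz1; rewrite -e w1.
    have := fsubsetP s4 w w4; rewrite !inE => /andP [wz /orP [->|w3]].
      by rewrite wz orbT.
    by rewrite wz andTb; move: (fsubsetP s3 w w3); rewrite !inE => /andP [_ ->].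
  have zU : z \in (C1 `|` C2)%fset by rewrite !inE z2 orbT.
  have := fproper_card_lt zU h; move: ltn; clear; lia.
have [C5 [c5 s5 y5]] := IH _ _ _ _ lt14 c1 c4 x1 x4 y1 ny4.
exists C5; split => //; apply/fsubsetP => w /(fsubsetP s5); rewrite !inE.
move=> /andP [wx /orP [w1|w4]]; first by rewrite wx w1.
have := fsubsetP s4 w w4; rewrite !inE => /andP [_ /orP [->|w3]].
  by rewrite wx orbT.
by move: (fsubsetP s3 w w3); rewrite !inE => /andP [_ ->]; rewrite wx.
Qed.

End FiniteMatroid.

(** * Cardinalities below an uncountable regular [H] *)

Lemma card_le_disjoint_family (T : choiceType) (X : set T) (F : set {fset T}) :
  (forall G, F G -> G != fset0 /\ [set` G] `<=` X) ->
  (forall G1 G2 x, F G1 -> F G2 -> G1 <> G2 -> x \in G1 -> x \in G2 -> False) ->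
  F #<= X.
Proof.
move=> FX Fdisj; have [[G0 FG0]|nF] := pselect (exists G, F G); last first.
  have -> : F = set0 by apply/seteqP; split => // G FG; apply: nF; exists G.
  exact: card_ge0.
have [/fset0Pn [x0 _] _] := FX _ FG0.
pose rep (G : {fset T}) := xget x0 (fun x => x \in G).
have repG G : F G -> rep G \in G.
  move=> FG; have [/fset0Pn [g gG] _] := FX _ FG.
  by apply: (@xgetPex _ x0 (fun x => x \in G)); exists g.
have rep_inj : {in F &, injective rep}.
  move=> G1 G2 /set_mem F1 /set_mem F2 e; apply: contrapT => ne.
  by apply: (Fdisj _ _ (rep G1) F1 F2 ne); [exact: repG|rewrite e; exact: repG].
rewrite -(card_le_eql (inj_card_eq rep_inj)); apply: subset_card_le.
by move=> _ [G FG <-]; have [_ GX] := FX _ FG; exact/GX/repG.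
Qed.

Lemma delta_system_image (U V : Type) (F : set U) (f : U -> set V) (K : set V) :
  (exists a b, [/\ F a, F b & a <> b]) -> {in F &, injective f} ->
  (forall a b, F a -> F b -> a <> b -> f a `&` f b = K) ->
  delta_system (f @` F) K.
Proof.
move=> [a [b [Fa Fb ab]]] finj fK; split.
  exists (f a), (f b); split; [by exists a|by exists b|].
  by move=> /finj; apply: contra_not ab; apply; exact: mem_set.
by move=> _ _ [a' Fa' <-] [b' Fb' <-] ne; apply: fK => // e; apply: ne; rewrite e.
Qed.

Lemma card_le_injfun (U V : Type) (X : set U) (Y : set V) (y0 : V) : X #<= Y ->
  exists f : U -> V, (forall u, X u -> Y (f u)) /\
    (forall u1 u2, X u1 -> X u2 -> f u1 = f u2 -> u1 = u2).
Proof.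
move=> /card_leP /injfunPex [g _ ig].
pose f u := if pselect (X u) is left h then set_val (g (SigSub (mem_set h))) else y0.
exists f; split.
  by move=> u Xu; rewrite /f; case: pselect => // h; exact: set_valP.
move=> u1 u2 X1 X2; rewrite /f; case: pselect => // h1; case: pselect => // h2.
move=> /val_inj /ig => /(_ (mem_set I) (mem_set I)) E.
by have := congr1 set_val E.
Qed.

Section LargeSets.
Variables (T : choiceType) (H : set T).
Hypotheses (uH : uncountable H) (rH : regular_card H).

Local Notation small A := (card_lt A H).

Lemma H_infinite : infinite_set H.
Proof. by move=> /finite_set_countable. Qed.

Lemma H_nonempty : exists h, H h.
Proof.
apply: contrapT => nh; apply: uH.
have -> : H = set0 by apply/seteqP; split => // z hz; apply: nh; exists z.
exact: countable0.
Qed.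

Lemma small_card_eq (U : Type) (A : set U) (V : Type) (B : set V) :
  A #= B -> small B -> small A.
Proof.
move=> e [h1 h2]; split; first by rewrite (card_le_eql e).
by rewrite (card_le_eqr e).
Qed.

Lemma small_card_le (U : Type) (A : set U) (V : Type) (B : set V) :
  A #<= B -> small B -> small A.
Proof.
move=> e [h1 h2]; split; first exact: card_le_trans e h1.
by move=> h; apply: h2; apply: card_le_trans h e.
Qed.

Lemma small_finite (U : Type) (A : set U) : finite_set A -> small A.
Proof.
move=> fA; split.
  have [n hn] := (finite_set_leP A).1 fA.
  apply: card_le_trans hn _; apply: card_le_trans (subset_card_le (@subsetT _ `I_n)) _.
  exact/infiniteP/H_infinite.
by move=> h; apply: H_infinite; apply: card_le_finite h fA.
Qed.

Lemma small_bigcup (U I : Type) (X : set U) (F : I -> set U) : X #<= H ->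
  small [set: I] -> (forall i, F i `<=` X /\ small (F i)) ->
  small (\bigcup_i F i).
Proof.
move=> XH sI hF; have [h0 _] := H_nonempty.
have [f [fXH finj]] := card_le_injfun h0 XH.
have injS (S : set U) : S `<=` X -> {in S &, injective f}.
  by move=> SX a b /set_mem Sa /set_mem Sb; apply: finj; [apply: SX|apply: SX].
pose G i := f @` F i.
have hG i : G i `<=` H /\ small (G i).
  have [FX sF] := hF i; split; first by move=> _ [u Fu <-]; apply: fXH; apply: FX.
  exact: small_card_eq (inj_card_eq (injS _ FX)) sF.
have := rH sI hG => sU.
have UX : \bigcup_i F i `<=` X by move=> u [i _ Fu]; have [FX _] := hF i; exact: FX.
apply: small_card_eq (card_esym (inj_card_eq (injS _ UX))) _.
have -> : f @` (\bigcup_i F i) = \bigcup_i G i.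
  apply/seteqP; split; first by move=> _ [u [i _ Fu] <-]; exists i => //; exists u.
  by move=> _ [i _ [u Fu <-]]; exists u => //; exists i.
exact: sU.
Qed.

Lemma small_setU (U : Type) (X : set U) (A1 A2 : set U) : X #<= H ->
  A1 `<=` X -> A2 `<=` X -> small A1 -> small A2 -> small (A1 `|` A2).
Proof.
move=> XH s1 s2 h1 h2.
have -> : A1 `|` A2 = \bigcup_(b : bool) (if b then A1 else A2).
  apply/seteqP; split; first by move=> u [h|h]; [exists true|exists false].
  by move=> u [[] _ h]; [left|right].
apply: small_bigcup XH _ _; first exact/small_finite/finite_finset.
by case.
Qed.

Lemma large_of_not_small (U : Type) (Y : set U) : Y #<= H -> ~ small Y -> H #<= Y.
Proof. by move=> YH ns; apply: contrapT => nb; apply: ns; split. Qed.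

Lemma large_setD (U : Type) (X Y A : set U) : X #<= H -> Y `<=` X -> H #<= Y ->
  small A -> H #<= (Y `\` A).
Proof.
move=> XH YX HY sA; apply: contrapT => nb.
have sYA : small (Y `\` A).
  split => //; apply: card_le_trans XH; apply: subset_card_le.
  by move=> u [Yu _]; exact: YX.
have sAY : small (A `&` Y).
  by apply: small_card_le sA; apply: subset_card_le => u [].
have := small_setU XH (fun u h => YX u (proj1 h)) (fun u h => YX u (proj2 h)) sYA sAY.
move=> [_ nH]; apply: nH; apply: card_le_trans HY _; apply: subset_card_le.
by move=> u Yu; have [Au|nAu] := pselect (A u); [right|left].
Qed.

Lemma large_nonempty (U : Type) (Y : set U) : H #<= Y -> exists y, Y y.
Proof.
move=> HY; apply: contrapT => ne.
have E : Y = set0 by apply/seteqP; split => // z hz; apply: ne; exists z.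
have [h Hh] := H_nonempty; rewrite E in HY; move/card_le0P: HY => E'.
by rewrite E' in Hh.
Qed.

Lemma large_two (U : Type) (Y : set U) : H #<= Y ->
  exists y1 y2, [/\ Y y1, Y y2 & y1 <> y2].
Proof.
move=> HY; have [y1 Y1] := large_nonempty HY.
apply: contrapT => ne; apply: H_infinite; apply: card_le_finite HY _.
apply: sub_finite_set (finite_set1 y1) => y Yy.
by apply: contrapT => yn; apply: ne; exists y1, y; split => // e; apply: yn; rewrite e.
Qed.

Lemma large_bigcup_piece (U I : Type) (X : set U) (F : I -> set U) : X #<= H ->
  small [set: I] -> (forall i, F i `<=` X) -> H #<= \bigcup_i F i ->
  exists i, H #<= F i.
Proof.
move=> XH sI FX hU; apply: contrapT => ne.
have [_ nU] := small_bigcup XH sI (fun i => conj (FX i) (conj (card_le_trans (subset_card_le (FX i)) XH)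
  (fun h => ne (ex_intro _ i h)))).
exact: nU.
Qed.

Lemma small_nat : small [set: nat].
Proof. by split; [exact/infiniteP/H_infinite|exact: uH]. Qed.


Lemma large_nonconflicting (U : Type) (S : set U) (conf : U -> U -> Prop) :
  (forall F : set U, F `<=` S ->
     (forall a b, F a -> F b -> a <> b -> ~ conf a b) -> small F ->
     exists u, [/\ S u, ~ F u & forall a, F a -> ~ conf u a /\ ~ conf a u]) ->
  exists F : set U, [/\ F `<=` S,
     (forall a b, F a -> F b -> a <> b -> ~ conf a b) & ~ small F].
Proof.
move=> hyp.
pose P (F : set U) := F `<=` S /\ (forall a b, F a -> F b -> a <> b -> ~ conf a b).
have [|A [[AS pA] mA]] := @Zorn_bigcup _ P.
  move=> Fs FsP tot; split.
    by move=> u [F FF Fu]; have [FS _] := FsP _ FF; exact: FS.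
  move=> a b [F1 F1F a1] [F2 F2F b2] ab.
  have [s12|s21] := tot _ _ F1F F2F.
    by have [_ p] := FsP _ F2F; apply: p => //; exact: s12.
  by have [_ p] := FsP _ F1F; apply: p => //; exact: s21.
exists A; split => // sA.
have [u [Su nAu hu]] := hyp A AS pA sA.
apply: (mA (u |` A)).
  split; first by move=> z Az; right.
  by move=> h; apply: nAu; apply: h; left.
split; first by move=> z [->|Az]; [exact: Su|exact: AS].
move=> a b [->|Aa] [->|Ab] ab //.
- by have [] := hu _ Ab.
- by have [] := hu _ Aa.
- exact: pA.
Qed.

Lemma large_disjoint_subfamily (Y : set T) (A : T -> {fset T}) : Y `<=` H -> H #<= Y ->
  (forall x, small [set e | Y e /\ x \in A e]) ->
  exists Y', [/\ Y' `<=` Y, H #<= Y' &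
    forall e e' x, Y' e -> Y' e' -> e <> e' -> x \in A e -> x \in A e' -> False].
Proof.
move=> YH HY sx.
have HH : H #<= H by [].
have [|F [FY pF nsF]] := @large_nonconflicting _ Y (fun a b => exists x, x \in A a /\ x \in A b).
  move=> F FY pF sF.
  pose V x := [set e | Y e /\ x \in A e].
  have VH x : V x `<=` H by move=> e [Ye _]; exact: YH.
  pose W := \bigcup_(s : set_type F) \bigcup_(i : set_type [set` A (set_val s)]) V (set_val i).
  have sW : small W.
    apply: (small_bigcup HH).
      apply: small_card_eq (card_setT F) sF.
    move=> s; split.
      by move=> e [i _ Vi]; exact: VH Vi.
    apply: (small_bigcup HH); first exact: small_card_eq (card_setT _) (small_finite (finite_fset _)).
    by move=> i; split; [exact: VH|exact: sx].
  have sWF : small (W `|` F).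
    apply: (small_setU HH _ _ sW sF).
      by move=> e [s _ [i _ [Ye _]]]; exact: YH.
    by move=> e Fe; exact: YH (FY _ Fe).
  have [u [Yu nWFu]] := large_nonempty (large_setD (subset_card_le YH) (@subset_refl _ Y) HY sWF).
  exists u; split => //; first by move=> Fu; apply: nWFu; right.
  move=> a Fa; split.
    move=> [x [xu xa]]; apply: nWFu; left.
    exists (SigSub (mem_set Fa)) => //; exists (SigSub (@mem_set _ [set` A a] x xa)) => //.
  move=> [x [xa xu]]; apply: nWFu; left.
  exists (SigSub (mem_set Fa)) => //; exists (SigSub (@mem_set _ [set` A a] x xa)) => //.
exists F; split => //.
  apply: large_of_not_small => //.
  by apply: card_le_trans (subset_card_le FY) (subset_card_le YH).
by move=> e e' x Fe Fe' ee' xe xe'; apply: (pF _ _ Fe Fe' ee'); exists x.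
Qed.

Lemma delta_lemma_bounded n : forall (Y : set T) (A : T -> {fset T}), Y `<=` H -> H #<= Y ->
  (forall e, Y e -> (#|` A e| <= n)%N) ->
  exists Y' (R : {fset T}), [/\ Y' `<=` Y, H #<= Y' &
    forall e e' x, Y' e -> Y' e' -> e <> e' -> x \in A e -> x \in A e' -> x \in R].
Proof.
elim: n => [|n IH] Y A YH HY hn.
  exists Y, fset0; split => // e e' x Ye _ _ xe.
  by move: (hn e Ye); rewrite leqn0 cardfs_eq0 => /eqP Ae; rewrite Ae in xe.
have [[x bx]|nb] := pselect (exists x, H #<= [set e | Y e /\ x \in A e]).
  pose Y1 := [set e | Y e /\ x \in A e].
  have Y1H : Y1 `<=` H by move=> e [Ye _]; exact: YH.
  have hn1 : forall e, Y1 e -> (#|` (A e `\ x)%fset| <= n)%N.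
    move=> e [Ye xe]; have := hn e Ye; rewrite (cardfsD1 x (A e)) xe; lia.
  have [Y' [R [s1 b1 h1]]] := IH Y1 (fun e => (A e `\ x)%fset) Y1H bx hn1.
  exists Y', (x |` R)%fset; split => //; first by move=> e /s1 [].
  move=> e e' z Ye Ye' ee' ze ze'; rewrite !inE.
  have [->//|zx] := eqVneq z x; rewrite /=.
  by apply: (h1 e e' z) => //; rewrite !inE zx.
have sx : forall x, small [set e | Y e /\ x \in A e].
  move=> x; split; first by apply: subset_card_le => e [Ye _]; exact: YH.
  by move=> h; apply: nb; exists x.
have [Y' [s1 b1 h1]] := large_disjoint_subfamily YH HY sx.
exists Y', fset0; split => // e e' x Ye Ye' ee' xe xe'.
by exfalso; apply: (h1 e e' x).
Qed.

Lemma delta_lemma (Y : set T) (A : T -> {fset T}) : Y `<=` H -> H #<= Y ->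
  exists Y' (R : {fset T}), [/\ Y' `<=` Y, H #<= Y' &
    forall e e' x, Y' e -> Y' e' -> e <> e' -> x \in A e -> x \in A e' -> x \in R].
Proof.
move=> YH HY.
have HH : H #<= H by [].
have [n bn] : exists n, H #<= [set e | Y e /\ #|` A e| = n].
  apply: (large_bigcup_piece HH small_nat).
    by move=> n e [Ye _]; exact: YH.
  apply: card_le_trans HY _; apply: subset_card_le => e Ye.
  by exists #|` A e|.
have [Y' [R [s1 b1 h1]]] := @delta_lemma_bounded n _ A (fun e h => YH e (proj1 h)) bn
  (fun e h => eq_leq (proj2 h)).
by exists Y', R; split => //; move=> e /s1 [].
Qed.
Lemma large_same_trace (U : Type) (X : set U) (f : U -> {fset T}) (s : seq T) :
  X #<= H -> H #<= X -> exists X', [/\ X' `<=` X, H #<= X' &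
    forall a b x, X' a -> X' b -> x \in s -> (x \in f a) = (x \in f b)].
Proof.
elim: s X => [|y s IH] X XH HX.
  by exists X; split.
have [X1 [s1 b1 h1]] := IH X XH HX.
have X1H : X1 #<= H := card_le_trans (subset_card_le s1) XH.
have [b hb] := @large_bigcup_piece _ bool X1 (fun b => [set a | X1 a /\ (y \in f a) = b])
  X1H (small_finite finite_finset) (fun b a h => proj1 h)
  (card_le_trans b1 (subset_card_le (fun a X1a => ex_intro2 _ _ (y \in f a) I (conj X1a erefl)))).
exists [set a | X1 a /\ (y \in f a) = b]; split => //.
  by move=> a [X1a _]; exact: s1.
move=> a c x [X1a ya] [X1c yc]; rewrite in_cons => /orP [/eqP ->|xs].
  by rewrite ya yc.
exact: h1.
Qed.

End LargeSets.


(** * Petals of a family of fundamental circuits *)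

Section Petals.
Variables (T : choiceType) (ind : set T -> Prop).
Hypothesis ind_ax : matroid_axioms ind.
Variables (H B B' Y : set T) (R : {fset T}) (C : T -> {fset T}).
Hypotheses (uH : uncountable H) (rH : regular_card H).
Hypotheses (indB : ind B) (HnB : H `<=` ~` B) (YH : Y `<=` H) (HY : H #<= Y).
Hypotheses (RB : forall x, x \in R -> B x)
  (C_circuit : forall e, Y e -> is_circuit ind [set` C e])
  (C_mem : forall e, Y e -> e \in C e)
  (C_sub : forall e x, Y e -> x \in C e -> x = e \/ B x)
  (C_meet : forall e e' x, Y e -> Y e' -> e <> e' -> x \in C e -> x \in C e' -> x \in R)
  (C_B' : forall e, Y e -> exists2 b, b \in C e & B' b)
  (C_B'R : forall e x, Y e -> x \in C e -> x \notin R -> ~ B' x).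

Local Notation circ D := (is_circuit ind [set` D]).

Definition petal e := (C e `\` R)%fset.
Definition petalB e := (petal e `\ e)%fset.
Definition petals (G : {fset T}) := (\bigcup_(g <- G) petal g)%fset.
Definition petalsB (G : {fset T}) := (\bigcup_(g <- G) petalB g)%fset.

Lemma petalsP x G : reflect (exists2 g, g \in G & x \in petal g) (x \in petals G).
Proof.
apply: (iffP (bigfcupP _ _ _ _)) => [[g /andP[gG _] xg]|[g gG xg]]; first by exists g.
by exists g => //; rewrite gG.
Qed.

Lemma petalsBP x G : reflect (exists2 g, g \in G & x \in petalB g) (x \in petalsB G).
Proof.
apply: (iffP (bigfcupP _ _ _ _)) => [[g /andP[gG _] xg]|[g gG xg]]; first by exists g.
by exists g => //; rewrite gG.
Qed.

Lemma petal_C e x : x \in petal e -> x \in C e.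
Proof. by rewrite inE => /andP []. Qed.

Lemma petal_notR e x : x \in petal e -> x \notin R.
Proof. by rewrite inE => /andP []. Qed.

Lemma C_petal e x : x \in C e -> x \in R \/ x \in petal e.
Proof. by move=> xC; rewrite !inE xC andbT; case: (x \in R); [left|right]. Qed.

Lemma Y_notB e : Y e -> ~ B e.
Proof. by move=> Ye; apply: HnB; apply: YH. Qed.

Lemma mem_petal e : Y e -> e \in petal e.
Proof. by move=> Ye; rewrite !inE C_mem // andbT; apply/negP => /RB; exact: Y_notB. Qed.

Lemma petalB_B e x : Y e -> x \in petalB e -> B x.
Proof.
move=> Ye; rewrite !inE => /and3P [xe _ xC].
by have [exe|//] := C_sub Ye xC; move: xe; rewrite exe eqxx.
Qed.

Lemma petal_disjoint e e' x : Y e -> Y e' -> e <> e' ->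
  x \in petal e -> x \in petal e' -> False.
Proof.
move=> Ye Ye' ee'; rewrite !inE => /andP [nR xC] /andP [_ xC'].
by move: nR; rewrite (C_meet Ye Ye' ee' xC xC').
Qed.

Lemma C_Y e x : Y e -> x \in C e -> Y x -> x = e.
Proof. by move=> Ye xC Yx; have [//|Bx] := C_sub Ye xC; case: (Y_notB Yx). Qed.

(* The circuit [C e] meets [B'], which it can only do inside [R]. *)
Lemma petal_indep e : Y e -> ind [set` petal e].
Proof.
move=> Ye; apply: (circuit_proper_indep (C_circuit Ye)).
have [b bC B'b] := C_B' Ye.
have bR : b \in R by apply: contrapT => /negP nbR; exact: (C_B'R Ye bC nbR B'b).
rewrite fproperEneq fsubsetDl andbT; apply/eqP => E.
by move: bC; rewrite -E !inE bR.
Qed.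

Lemma petals_card (G : {fset T}) : (forall g, g \in G -> Y g) ->
  #|` petals G| = (#|` G| + #|` petalsB G|)%N.
Proof.
move=> GY; have EP : petals G = (G `|` petalsB G)%fset.
  apply/fsetP => x; apply/idP/idP.
    move=> /petalsP [g gG xP]; rewrite in_fsetU; have [->|nxg] := eqVneq x g.
      by rewrite gG.
    by apply/orP; right; apply/petalsBP; exists g => //; apply/fsetD1P.
  rewrite in_fsetU => /orP [xG|/petalsBP [g gG /fsetD1P [_ xP]]]; apply/petalsP.
    by exists x => //; apply/mem_petal/GY.
  by exists g.
have I0 : (G `&` petalsB G)%fset = fset0.
  apply/fsetP => x; rewrite in_fsetI in_fset0.
  apply/negP => /andP [xG /petalsBP [g gG xQ]].
  have [xg|nxg] := eqVneq x g; first by move: xQ; rewrite xg fsetD11.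
  move: xQ => /fsetD1P [_ xP].
  apply: (petal_disjoint (GY _ gG) (GY _ xG) _ xP (mem_petal (GY _ xG))).
  by move=> e; move: nxg; rewrite e eqxx.
by rewrite EP -cardfsUI I0 cardfs0 addn0.
Qed.

(* Augmenting the independent set [R `|` petalsB G] of [B] from [petals G] could
   only add some [g] of [G], which closes the dependent [C g]. *)
Lemma indep_petals_card_le (G : {fset T}) : (forall g, g \in G -> Y g) ->
  ind [set` petals G] -> (#|` G| <= #|` R|)%N.
Proof.
move=> GY iPG.
have iRQ : ind [set` (R `|` petalsB G)%fset].
  apply: (indepS ind_ax indB) => x /=; rewrite inE => /orP [/RB //|/petalsBP [g gG xQ]].
  exact: petalB_B (GY _ gG) xQ.
have le : (#|` petals G| <= #|` (R `|` petalsB G)%fset|)%N.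
  rewrite leqNgt; apply/negP => lt.
  have [x [/petalsP [g gG xPg] nxRQ ix]] := indep_augment ind_ax iRQ iPG lt.
  have xg : x = g.
    apply/eqP; apply: contraNT nxRQ => nxg.
    by rewrite in_fsetU; apply/orP; right; apply/petalsBP; exists g => //; apply/fsetD1P.
  subst x; have [nCg _] := C_circuit (GY _ gG); apply: nCg.
  apply: (indepS ind_ax ix) => y /= yC.
  have [yR|yP] := C_petal yC; first by right; rewrite /= in_fsetU yR.
  have [->|nyg] := eqVneq y g; first by left.
  right; rewrite /= in_fsetU; apply/orP; right.
  by apply/petalsBP; exists g => //; apply/fsetD1P.
move: le; rewrite petals_card // => le.
by move: le (cardfsUI R (petalsB G)); clear; lia.
Qed.

(* Strong elimination against [C g] removes each [g] of [G] from the circuit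
   while keeping [q]; at the end the circuit would lie in [B]. *)
Lemma circuit_avoids_petalB es (G : {fset T}) (D : {fset T}) : Y es ->
  (forall g, g \in G -> Y g /\ g <> es) -> circ D ->
  (forall x, x \in D -> [\/ x \in petalB es, x \in R | x \in petals G]) ->
  ~ exists2 q, q \in D & q \in petalB es.
Proof.
move=> Yes GY; have [n] := ubnP #|` (D `&` G)%fset|.
elim: n D => // n IH D lt cD sD [q qD qQ].
have [E0|ne] := eqVneq (D `&` G)%fset fset0.
  have [nD _] := cD; apply: nD; apply: (indepS ind_ax indB) => x /= xD.
  have [xQ|xR|/petalsP [g gG xP]] := sD _ xD.
  - exact: petalB_B Yes xQ.
  - exact: RB.
  - have [xg|nxg] := eqVneq x g.
      by move: E0 => /fsetP /(_ x); rewrite in_fsetI in_fset0 xD xg gG.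
    by apply: (petalB_B (proj1 (GY _ gG))); apply/fsetD1P.
have [g] := fset0Pn _ ne; rewrite in_fsetI => /andP [gD gG].
have [Yg gnes] := GY _ gG.
have nqC : q \notin C g.
  apply/negP => qC; have qP : q \in petal es by case/fsetD1P: qQ.
  have [qR|qPg] := C_petal qC; first by move: (petal_notR qP); rewrite qR.
  exact: (petal_disjoint Yg Yes gnes qPg qP).
have [D' [cD' sD' qD']] :=
  circuit_elim_strong ind_ax cD (C_circuit Yg) gD (C_mem Yg) qD nqC.
apply: (IH D') => //; last by exists q.
  have sub : ((D' `&` G) `<=` (D `&` G) `\ g)%fset.
    apply/fsubsetP => y; rewrite in_fsetI => /andP [yD' yG].
    have := fsubsetP sD' y yD'; rewrite !inE => /andP [yg /orP [yD|yC]].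
      by rewrite yg yD yG.
    by move: yg; rewrite (C_Y Yg yC (proj1 (GY _ yG))) eqxx.
  have gDG : g \in (D `&` G)%fset by rewrite in_fsetI gD gG.
  by have := fproper_card_lt gDG sub; move: lt; clear; lia.
move=> x xD'; have := fsubsetP sD' x xD'; rewrite in_fsetD1 in_fsetU.
move=> /andP [_ /orP [xD|xC]]; first exact: sD.
have [xR|xP] := C_petal xC; first by constructor 2.
by constructor 3; apply/petalsP; exists g.
Qed.

Lemma indep_petalB_petals es (G : {fset T}) : Y es ->
  (forall g, g \in G -> Y g /\ g <> es) ->
  ind [set` petals G] -> ind [set` (petalB es `|` petals G)%fset].
Proof.
move=> Yes GY iPG; apply: contrapT => dep.
have [D [sD cD]] := dependent_has_circuit dep.
have sDx x : x \in D -> [\/ x \in petalB es, x \in R | x \in petals G].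
  by move=> /(fsubsetP sD); rewrite in_fsetU => /orP [h|h]; [constructor 1|constructor 3].
apply: (circuit_avoids_petalB Yes GY cD sDx).
apply: contrapT => nq; have [nD _] := cD; apply: nD.
apply: (indepS ind_ax iPG) => x /= xD.
have := fsubsetP sD x xD; rewrite in_fsetU => /orP [xQ|//].
by case: nq; exists x.
Qed.

Definition petal_bounded (Z : set T) m := forall G : {fset T},
  (forall g, g \in G -> Z g) -> ind [set` petals G] -> (#|` G| <= m)%N.

Lemma petal_bounded_R : petal_bounded Y #|` R|.
Proof. exact: indep_petals_card_le. Qed.

Section Closing.
Variables (m : nat) (Y0 : set T) (es : T).
Hypotheses (Y0Y : Y0 `<=` Y) (HY0 : H #<= Y0) (Y0_bounded : petal_bounded Y0 m)
  (m_min : forall Z m', Z `<=` Y -> H #<= Z -> petal_bounded Z m' -> (m <= m')%N)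
  (Y0es : Y0 es).

Local Notation small A := (card_lt A H).
Local Notation Y1 := (Y0 `\ es).

Let Yes : Y es := Y0Y Y0es.
Let Y1H : Y1 `<=` H := fun y Y1y => YH (Y0Y (proj1 Y1y)).

Definition closing (G : {fset T}) := [/\ (forall g, g \in G -> Y1 g), G != fset0 &
  exists D : {fset T}, [/\ circ D, es \in D & (D `<=` petal es `|` petals G)%fset]].

Lemma petals_fset1 e : petals [fset e]%fset = petal e.
Proof.
apply/fsetP => x; apply/petalsP/idP => [[g]|xP]; last by exists e; rewrite ?fset11.
by rewrite inE => /eqP ->.
Qed.

Lemma bound_gt0 : (0 < m)%N.
Proof.
have := Y0_bounded (G := [fset es]%fset); rewrite cardfs1 petals_fset1; apply.
  by move=> g; rewrite inE => /eqP ->.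
exact: petal_indep.
Qed.

Lemma large_unbounded Z : Z `<=` Y -> H #<= Z ->
  exists G : {fset T}, [/\ (forall g, g \in G -> Z g), ind [set` petals G] & (m <= #|` G|)%N].
Proof.
move=> ZY HZ; apply: contrapT => nG.
have : (m <= m.-1)%N.
  apply: m_min ZY HZ _ => G GZ iG; rewrite -ltnS prednK ?bound_gt0 // ltnNge.
  by apply/negP => le; apply: nG; exists G.
by rewrite leqNgt prednK ?bound_gt0 // leqnn.
Qed.

(* [es |` G] has more than [m] members, so its petals are dependent; a circuit
   in them must pass through [es] by [indep_petalB_petals]. *)
Lemma closing_in_large Z : Z `<=` Y1 -> H #<= Z ->
  exists2 G, closing G & (forall g, g \in G -> Z g).
Proof.
move=> ZY1 HZ.
have [G [GZ iG leG]] := large_unbounded (fun y Zy => Y0Y (proj1 (ZY1 _ Zy))) HZ.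
have GY1 g : g \in G -> Y1 g by move/GZ/ZY1.
have nesG : es \notin G by apply/negP => /GY1 [_]; apply.
have ndep : ~ ind [set` (petal es `|` petals G)%fset].
  move=> iX; suff : (#|` (es |` G)%fset| <= m)%N.
    by rewrite cardfsU1 nesG add1n ltnNge leG.
  apply: Y0_bounded.
    by move=> g; rewrite in_fset1U => /orP [/eqP ->//|/GY1 []].
  apply: (indepS ind_ax iX) => x /= /petalsP [g]; rewrite in_fset1U in_fsetU.
  move=> /orP [/eqP -> -> //|gG xP]; apply/orP; right; apply/petalsP; exists g => //.
have [D [sD cD]] := dependent_has_circuit ndep.
exists G => //; split => //.
  by rewrite -cardfs_gt0; apply: leq_trans leG; exact: bound_gt0.
exists D; split => //; apply: contrapT => /negP nesD.
have [nD _] := cD; apply: nD.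
have GYn g : g \in G -> Y g /\ g <> es.
  by move=> /GY1 [Y0g gn]; split; [exact: Y0Y|move=> e; apply: gn; rewrite e].
apply: (indepS ind_ax (indep_petalB_petals Yes GYn iG)) => x /= xD.
have := fsubsetP sD x xD; rewrite !in_fsetU => /orP [xP|->]; last by rewrite orbT.
have [xe|nxe] := eqVneq x es; first by move: nesD; rewrite -xe xD.
by apply/orP; left; apply/fsetD1P.
Qed.

Local Notation meet G1 G2 := (exists x, x \in G1 /\ x \in G2).

(* A maximal disjoint family of closing sets is large: by regularity its union
   is small whenever the family is, leaving a large set to find another one. *)
Lemma large_closing_family : exists F : set {fset T},
  [/\ F `<=` closing, (forall G1 G2, F G1 -> F G2 -> G1 <> G2 -> ~ meet G1 G2),
      F #<= H & H #<= F].
Proof.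
have [|F [Fclosing Fdisj nsF]] :=
    @large_nonconflicting _ H _ closing (fun G1 G2 => meet G1 G2).
  move=> F Fclosing Fdisj sF.
  pose U := \bigcup_(s : set_type F) [set` set_val s].
  have sU : small U.
    apply: (small_bigcup uH rH (card_lexx H)); first exact: small_card_eq (card_setT F) sF.
    move=> s; have [GY1 _ _] := Fclosing _ (set_valP s); split.
      by move=> x /= /GY1 /Y1H.
    by have := small_finite uH (finite_fset (set_val s)).
  have HY1 : H #<= Y1.
    apply: (large_setD uH rH (subset_card_le (fun y Y0y => YH (Y0Y Y0y))) _ HY0) => //.
    by have := small_finite uH (finite_set1 es).
  have [G cG GY'] := closing_in_large (@subDsetl _ Y1 U)
    (large_setD uH rH (subset_card_le Y1H) (@subset_refl _ Y1) HY1 sU).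
  have GnU x : x \in G -> ~ U x by move=> /GY' [].
  exists G; split => //.
    move=> FG; have [_ /fset0Pn [g gG] _] := cG.
    by apply: (GnU g gG); exists (SigSub (mem_set FG)).
  move=> G' FG'; split => -[x [xG xG']]; apply: (GnU x) => //;
    by exists (SigSub (mem_set FG')).
have FH : F #<= H.
  apply: card_le_trans (subset_card_le Y1H).
  apply: card_le_disjoint_family.
    by move=> G /Fclosing [GY1 ne _]; split => // x; exact: GY1.
  by move=> G1 G2 x F1 F2 ne x1 x2; apply: (Fdisj _ _ F1 F2 ne); exists x.
by exists F; split => //; apply: large_of_not_small.
Qed.

Definition closing_circuit (G : {fset T}) := xget fset0 (fun D : {fset T} =>
  [/\ circ D, es \in D & (D `<=` petal es `|` petals G)%fset]).

Lemma closing_circuitP G : closing G ->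
  [/\ circ (closing_circuit G), es \in closing_circuit G &
      (closing_circuit G `<=` petal es `|` petals G)%fset].
Proof. by case=> _ _; exact: xgetPex. Qed.

Lemma closing_circuit_notin_petal G : closing G ->
  exists2 x, x \in closing_circuit G & x \notin petal es.
Proof.
move=> cG; have [[nD _] _ _] := closing_circuitP cG; apply: contrapT => h.
apply: nD; apply: (indepS ind_ax (petal_indep Yes)) => x /= xD.
by apply: contrapT => /negP nx; apply: h; exists x.
Qed.

Lemma closing_circuit_meet G1 G2 x : closing G1 -> closing G2 -> ~ meet G1 G2 ->
  x \in closing_circuit G1 -> x \in closing_circuit G2 -> x \in petal es.
Proof.
move=> cG1 cG2 nmeet x1 x2.
have [_ _ /fsubsetP s1] := closing_circuitP cG1.
have [_ _ /fsubsetP s2] := closing_circuitP cG2.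
move: (s1 x x1) (s2 x x2); rewrite !in_fsetU.
move=> /orP [//|/petalsP [g1 g1G xP1]] /orP [//|/petalsP [g2 g2G xP2]].
have [GY1 _ _] := cG1; have [GY2 _ _] := cG2.
have [g12|ng12] := eqVneq g1 g2.
  by case: nmeet; exists g1; split => //; rewrite g12.
have [Y0g1 _] := GY1 _ g1G; have [Y0g2 _] := GY2 _ g2G.
case: (petal_disjoint (Y0Y Y0g1) (Y0Y Y0g2) _ xP1 xP2) => e.
by move: ng12; rewrite e eqxx.
Qed.

(* The circuits of a large disjoint family of closing sets pairwise meet inside
   the finite [petal es], so a large subfamily has a common trace there. *)
Lemma closing_delta_system : exists (D : set (set T)) (K : set T),
  [/\ delta_system D K, D #= H & (forall Dc, D Dc -> is_circuit ind Dc)] /\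
  [/\ (forall Dc, D Dc -> Dc `<=` \bigcup_(e in Y) [set` C e]), K es &
      K `<=` [set` C es] `\` B'].
Proof.
have [F [Fclosing Fdisj FH HF]] := large_closing_family.
have cc_inj : {in F &, injective closing_circuit}.
  move=> G1 G2 /set_mem F1 /set_mem F2 e; apply: contrapT => ne.
  have [x xD nxP] := closing_circuit_notin_petal (Fclosing _ F1).
  suff : x \in petal es by rewrite (negbTE nxP).
  apply: (closing_circuit_meet (Fclosing _ F1) (Fclosing _ F2)) (xD) _.
    exact: Fdisj.
  by rewrite -e.
have [F' [F'F HF' trF]] := large_same_trace uH rH closing_circuit (petal es) FH HF.
have [G0 F'G0] := large_nonempty uH HF'.
pose K := [set x | x \in closing_circuit G0 /\ x \in petal es].
have injF' : {in F' &, injective (fun G => [set` closing_circuit G])}.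
  move=> a b /set_mem Fa /set_mem Fb /(can_inj (@set_fsetK _)) e.
  by apply: cc_inj => //; apply/mem_set; exact: F'F.
exists [set [set` closing_circuit G] | G in F'], K; split; split.
- apply: (delta_system_image (large_two uH HF') injF') => G1 G2 F1 F2 ne.
  apply/seteqP; split.
    move=> x [/= x1 x2]; have xP := closing_circuit_meet (Fclosing _ (F'F _ F1))
      (Fclosing _ (F'F _ F2)) (Fdisj _ _ (F'F _ F1) (F'F _ F2) ne) x1 x2.
    by split => //; rewrite (trF G0 G1 x).
  by move=> x [x0 xP]; split => /=; rewrite -(trF G0 _ x).
- apply: card_eq_trans (inj_card_eq injF') _.
  by apply/card_eqPle; split => //; exact: card_le_trans (subset_card_le F'F) FH.
- by move=> _ [G FG <-]; have [] := closing_circuitP (Fclosing _ (F'F _ FG)).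
- move=> _ [G FG <-] x /= xD.
  have cG := Fclosing _ (F'F _ FG); have [_ _ /fsubsetP sD] := closing_circuitP cG.
  move: (sD x xD); rewrite in_fsetU => /orP [xP|/petalsP [g gG xP]].
    by exists es => //; exact: petal_C xP.
  have [GY1 _ _] := cG; have [Y0g _] := GY1 _ gG.
  by exists g; [exact: Y0Y|exact: petal_C xP].
- by split; [have [] := closing_circuitP (Fclosing _ (F'F _ F'G0))|exact: mem_petal].
- by move=> x [_ xP]; split; [exact: petal_C xP|exact: C_B'R Yes (petal_C xP) (petal_notR xP)].
Qed.

End Closing.

Lemma petals_delta_system : exists es (D : set (set T)) (K : set T),
  [/\ Y es, delta_system D K, D #= H & (forall Dc, D Dc -> is_circuit ind Dc)] /\
  [/\ (forall Dc, D Dc -> Dc `<=` \bigcup_(e in Y) [set` C e]), K es &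
      K `<=` [set` C es] `\` B'].
Proof.
pose bounded m := exists Y0, [/\ Y0 `<=` Y, H #<= Y0 & petal_bounded Y0 m].
have hex : exists m, `[< bounded m >].
  by exists #|` R|; apply/asboolP; exists Y; split => //; exact: petal_bounded_R.
case: (ex_minnP hex) => m /asboolP [Y0 [Y0Y HY0 Y0_bounded]] minm.
have m_min Z m' : Z `<=` Y -> H #<= Z -> petal_bounded Z m' -> (m <= m')%N.
  by move=> ZY HZ bZ; apply: minm; apply/asboolP; exists Z.
have [es Y0es] := large_nonempty uH HY0.
have [D [K [[dD DH cD] [DC Kes KC]]]] :=
  closing_delta_system Y0Y HY0 Y0_bounded m_min Y0es.
by exists es, D, K; split; split => //; exact: Y0Y.
Qed.

End Petals.

(** * Fundamental circuits *)

Lemma fcircP (T : choiceType) (M : finitary_matroid T) (B : set T) e :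
  base M B -> ~ B e -> fcirc M e B !=set0 ->
  [/\ circuit M (fcirc M e B), fcirc M e B `<=` e |` B, fcirc M e B e &
      finite_set (fcirc M e B)].
Proof.
move=> [iB _] nBe ne.
have ex : exists C, circuit M C /\ C `<=` e |` B.
  apply: contrapT => nex; move: ne; rewrite /fcirc xgetPN; first by move=> [x []].
  by move=> C cC; apply: nex; exists C.
have [cC sC] := xgetPex set0 ex.
split => //; last exact: indep_finitary cC.
apply: contrapT => nCe; have [nC _] := cC; apply: nC.
apply: (indepS (indep_axioms M) iB) => x xC.
by have [xe|//] := sC x xC; move: xC; rewrite xe.
Qed.

Section FundamentalCircuits.
Variables (T : choiceType) (M : finitary_matroid T) (B H B' : set T).
Hypotheses (baseB : base M B) (HnB : H `<=` ~` B).
Hypotheses (uH : uncountable H) (rH : regular_card H).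
Hypothesis (B'H : card_lt B' H).
Hypothesis (C_B' : forall e, H e -> fcirc M e B `&` B' !=set0).

Local Notation C e := (fset_set (fcirc M e B)).

Let fcirc_spec e : H e -> [/\ circuit M (fcirc M e B), fcirc M e B `<=` e |` B,
  fcirc M e B e & finite_set (fcirc M e B)].
Proof.
move=> He; apply: fcircP (HnB He) _ => //.
by have [x [Cx _]] := C_B' He; exists x.
Qed.

Lemma set_fcirc e : H e -> [set` C e] = fcirc M e B.
Proof. by move=> He; rewrite fset_setK //; have [] := fcirc_spec He. Qed.

Lemma mem_fcirc e x : H e -> x \in C e <-> fcirc M e B x.
Proof.
by move=> He; rewrite in_fset_set ?in_setE //; have [] := fcirc_spec He.
Qed.

Lemma fcirc_sub e x : H e -> x \in C e -> x = e \/ B x.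
Proof. by move=> He /(mem_fcirc _ He); have [_ s _ _] := fcirc_spec He; apply: s. Qed.

(* After a Delta-system refinement, only fewer than |H| circuits can still meet
   [B'] outside the root, as they do so in pairwise distinct elements. *)
Lemma fcirc_root : exists Y (R : {fset T}), [/\ Y `<=` H, H #<= Y,
  (forall x, x \in R -> B x),
  (forall e e' x, Y e -> Y e' -> e <> e' -> x \in C e -> x \in C e' -> x \in R) &
  (forall e x, Y e -> x \in C e -> x \notin R -> ~ B' x)].
Proof.
have [Y' [R0 [Y'H HY' R0meet]]] := delta_lemma uH rH (fun e => C e) (@subset_refl _ H) (card_lexx H).
pose R := fset_set ([set` R0] `&` B).
have fR : finite_set ([set` R0] `&` B) by apply: finite_setIl; exact: finite_fset.
have inR x : x \in R <-> (x \in R0 /\ B x) by rewrite in_fset_set // in_setE.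
have Rmeet e e' x : Y' e -> Y' e' -> e <> e' -> x \in C e -> x \in C e' -> x \in R.
  move=> Ye Ye' ee' xe xe'; apply/inR; split; first exact: R0meet xe xe'.
  have [xe2|//] := fcirc_sub (Y'H _ Ye) xe; subst x.
  have [//|Be] := fcirc_sub (Y'H _ Ye') xe'.
  by case: (HnB (Y'H _ Ye) Be).
pose Bad := [set e | Y' e /\ exists x, [/\ x \in C e, x \notin R & B' x]].
pose wit e := xget e (fun x => [/\ x \in C e, x \notin R & B' x]).
have witP e : Bad e -> [/\ wit e \in C e, wit e \notin R & B' (wit e)].
  by move=> [_ ex]; exact: xgetPex ex.
have wit_inj : {in Bad &, injective wit}.
  move=> e e' /set_mem Be /set_mem Be' E; apply: contrapT => ne.
  have [c1 r1 _] := witP e Be; have [c2 _ _] := witP e' Be'.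
  by move: r1; rewrite (Rmeet e e' _ (proj1 Be) (proj1 Be') ne c1) // E.
have BadB' : Bad #<= B'.
  rewrite -(card_le_eql (inj_card_eq wit_inj)); apply: subset_card_le.
  by move=> _ [e Be <-]; have [_ _ b] := witP e Be.
exists (Y' `\` Bad), R; split.
- by move=> e [/Y'H].
- exact: (large_setD uH rH (card_lexx H) Y'H HY' (small_card_le BadB' B'H)).
- by move=> x /inR [].
- by move=> e e' x [Ye _] [Ye' _]; exact: Rmeet.
- by move=> e x [Ye nB] xC nR B'x; apply: nB; split => //; exists x.
Qed.

Theorem fcirc_delta_system : exists e_star, exists D : set (set T), exists K : set T,
  [/\ H e_star, delta_system D K, D #= H & (forall C, D C -> circuit M C)] /\
  [/\ \bigcup_(C in D) C `<=` \bigcup_(e in H) fcirc M e B,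
      K e_star &
      K `<=` fcirc M e_star B `\` B'].
Proof.
have [Y [R [YH HY RB Rmeet RB']]] := fcirc_root.
have C_circuit e : Y e -> is_circuit (indep M) [set` C e].
  by move=> /YH He; rewrite set_fcirc //; have [] := fcirc_spec He.
have C_mem e : Y e -> e \in C e.
  by move=> /YH He; apply/mem_fcirc => //; have [] := fcirc_spec He.
have C_sub e x : Y e -> x \in C e -> x = e \/ B x by move/YH; exact: fcirc_sub.
have C_B'Y e : Y e -> exists2 b, b \in C e & B' b.
  by move=> /YH He; have [b [Cb B'b]] := C_B' He; exists b => //; apply/mem_fcirc.
have [es [D [K [[Yes dD DH cD] [DC Kes KC]]]]] := petals_delta_system
  (indep_axioms M) uH rH (proj1 baseB) HnB YH HY RB C_circuit C_mem C_sub Rmeet C_B'Y RB'.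
exists es, D, K; split; split => //; first exact: YH.
- move=> x [Dc DDc xDc]; have [e Ye xe] := DC Dc DDc x xDc.
  by exists e; [exact: YH|rewrite -set_fcirc //; exact: YH].
- by rewrite -set_fcirc //; exact: YH.
Qed.

End FundamentalCircuits.

Theorem lemma3p4 (E : Type) (M : finitary_matroid E) (B H B' : set E) :
  base M B -> H `<=` ~` B ->
  uncountable H -> regular_card H ->
  B' `<=` B -> card_lt B' H ->
  (forall e, H e -> fcirc M e B `&` B' !=set0) ->
  exists e_star, exists D : set (set E), exists K : set E,
    [/\ H e_star, delta_system D K, D #= H & (forall C, D C -> circuit M C)] /\
    [/\ \bigcup_(C in D) C `<=` \bigcup_(e in H) fcirc M e B,
        K e_star &
        K `<=` fcirc M e_star B `\` B'].
Proof.
move=> baseB HnB uH rH _ B'H C_B'.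
exact: (@fcirc_delta_system {classic E} M B H B').
Qed.
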